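(* Let $H$ be a real Hilbert space, $A:H\to c_0$ bounded linear with adjoint $A^*:\ell^1\to H$ (identifying $c_0^*=\ell^1$), let $H_n\subset H$ be a subspace of dimension $n$ with $\mathcal N(A)\cap H_n=\{0\}$, let $P_n$ be the orthogonal projection onto $H_n$, and let $f^\delta\in H$. Then $u^n\in\ell^1$ is a solution of $$\min_{u\in\ell^1}\|u\|_1\quad\text{subject to}\quad \langle z,A^*u\rangle=\langle z,f^\delta\rangle\ \ \forall z\in H_n$$ if and only if $u^n\in E_n$ and $\langle z,A^*u^n\rangle=\langle z,f^\delta\rangle$ for all $z\in H_n$, where $$E_n=(\partial\|\cdot\|_1)^{-1}(AH_n)=\{u\in\ell^1:\ \partial\|\cdot\|_1(u)\cap AH_n\neq\emptyset\}.$$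
   Context: For $u\in\ell^1$, $\partial\|\cdot\|_1(u)=\{\xi\in\ell^\infty:\ \|\xi\|_\infty\le1,\ \sum_i\xi_iu_i=\|u\|_1\}$, i.e. $\xi_i=u_i/|u_i|$ if $u_i\ne0$ and $\xi_i\in[-1,1]$ if $u_i=0$. $AH_n=\{Az: z\in H_n\}\subset c_0\subset\ell^\infty$. $A^*$ is defined by $\langle A^*u,z\rangle=\sum_iu_i(Az)_i$. *)

From HB Require Import structures.
From mathcomp Require Import all_boot all_order all_algebra.
From mathcomp Require Import all_classical all_reals all_analysis.
Set Implicit Arguments. Unset Strict Implicit. Unset Printing Implicit Defensive.
Import Order.TTheory GRing.Theory Num.Theory.
Import numFieldNormedType.Exports.
Local Open Scope classical_set_scope.
Local Open Scope ring_scope.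

Section Defs.
Variable R : realType.

Definition in_l1 (u : R^nat) : Prop := cvgn (series (fun i => `|u i|)).

Definition norm1 (u : R^nat) : R := limn (series (fun i => `|u i|)).

Definition in_linf (xi : R^nat) : Prop := exists M : R, forall i, `|xi i| <= M.

Definition in_c0 (xi : R^nat) : Prop := xi @ \oo --> (0 : R).

Definition pairing (xi u : R^nat) : R := limn (series (fun i => xi i * u i)).

Definition subdiff_norm1 (u : R^nat) : set (R^nat) :=
  [set xi | in_linf xi /\ (forall i, `|xi i| <= 1) /\ pairing xi u = norm1 u].

Definition is_inner_product (H : normedModType R) (ip : H -> H -> R) : Prop :=
  (forall (a : R) (x y z : H), ip (a *: x + y) z = a * ip x z + ip y z) /\
  (forall x y : H, ip x y = ip y x) /\
  (forall x : H, `|x| = Num.sqrt (ip x x)).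

Definition bounded_linear_c0 (H : normedModType R) (A : H -> R^nat) : Prop :=
  (forall (a : R) (x y : H) i, A (a *: x + y) i = a * A x i + A y i) /\
  (forall x, in_c0 (A x)) /\
  (exists C : R, forall x i, `|A x i| <= C * `|x|).

Definition is_adjoint (H : normedModType R) (ip : H -> H -> R)
  (A : H -> R^nat) (Astar : R^nat -> H) : Prop :=
  forall u, in_l1 u -> forall z, ip (Astar u) z = pairing (A z) u.

Definition lin_indep (H : lmodType R) (n : nat) (e : 'I_n -> H) : Prop :=
  forall c : 'I_n -> R, \sum_(i < n) c i *: e i = 0 -> forall i, c i = 0.

(* the span of the family e (the n-dimensional subspace H_n when e is free) *)
Definition span_of (H : lmodType R) (n : nat) (e : 'I_n -> H) : set H :=
  [set z | exists c : 'I_n -> R, z = \sum_(i < n) c i *: e i].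

Definition constraint (H : normedModType R) (ip : H -> H -> R)
  (Astar : R^nat -> H) (Hn : set H) (f : H) (u : R^nat) : Prop :=
  forall z, Hn z -> ip z (Astar u) = ip z f.

Definition is_min_solution (H : normedModType R) (ip : H -> H -> R)
  (Astar : R^nat -> H) (Hn : set H) (f : H) (u : R^nat) : Prop :=
  in_l1 u /\ constraint ip Astar Hn f u /\
  forall v, in_l1 v -> constraint ip Astar Hn f v -> norm1 u <= norm1 v.

Definition En (H : normedModType R) (A : H -> R^nat) (Hn : set H) : set (R^nat) :=
  [set u | in_l1 u /\ exists xi, subdiff_norm1 u xi /\ (A @` Hn) xi].

End Defs.

From HB Require Import structures.
From mathcomp Require Import all_boot all_order all_algebra.
From mathcomp Require Import all_classical all_reals all_analysis.
From mathcomp Require Import ring lra.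
Import Order.TTheory GRing.Theory Num.Theory.
Import numFieldNormedType.Exports.
Local Open Scope classical_set_scope.
Local Open Scope ring_scope.

(* Sufficiency is weak duality: if [xi = A z] with [z] in [H_n] is a
   subgradient of the l^1 norm at [u], then for every feasible [v]
   [||v||_1 >= <xi, v> = <z, A^* v> = <z, f> = <xi, u> = ||u||_1].
   Necessity is the existence of a Lagrange multiplier.  Writing [P v] for the
   vector of moments [<e_k, A^* v>], minimality of [u] says that the convex cone
   of pairs [(P v - t P u, ||v||_1 - t ||u||_1)] in [R^n x R] contains no
   [(0, x)] with [x < 0].  A finite-dimensional Hahn-Banach argument, extending
   a linear minorant one coordinate at a time, yields [c] in [R^n] with
   [c . (P v - t P u) <= ||v||_1 - t ||u||_1]; then [xi = A (sum_k c_k e_k)]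
   satisfies [<xi, v> <= ||v||_1] (so [||xi||_oo <= 1], testing unit vectors),
   and [t = 1] with [v = 0, 2 u] gives [<xi, u> = ||u||_1]. *)

Section SequenceSpaces.
Context {R : realType}.
Implicit Types (a u v : R^nat) (s : R).

Lemma is_cvg_series_bounded_mul a v (M : R) : in_l1 v -> (forall i, `|a i| <= M) ->
  cvgn (series (fun i => a i * v i)).
Proof.
move=> hv hM; apply: normed_cvg.
have M0 : 0 <= M by apply: le_trans (hM 0%N).
apply: (@series_le_cvg _ _ (fun i => M * `|v i|)) => //=.
- by move=> i; rewrite mulr_ge0.
- by move=> i; rewrite normrM ler_wpM2r.
- exact: is_cvg_seriesZ.
Qed.

Lemma pairing_le_norm1 a v : in_l1 v -> (forall i, `|a i| <= 1) ->
  pairing a v <= norm1 v.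
Proof.
move=> hv ha; apply: lim_series_le => //; first exact: is_cvg_series_bounded_mul ha.
move=> i; apply: le_trans (ler_norm _) _; rewrite normrM.
by rewrite -[leRHS]mul1r ler_wpM2r.
Qed.

Lemma in_l1D {u v} : in_l1 u -> in_l1 v -> in_l1 (fun i => u i + v i).
Proof.
move=> hu hv; apply: (@series_le_cvg _ _ (fun i => `|u i| + `|v i|)) => //=.
- by move=> i; apply: ler_normD.
- exact: is_cvg_seriesD.
Qed.

Lemma in_l1Z s {v} : in_l1 v -> in_l1 (fun i => s * v i).
Proof.
by move=> hv; rewrite /in_l1; under eq_fun do rewrite normrM; exact: is_cvg_seriesZ.
Qed.

Lemma norm1D {u v} : in_l1 u -> in_l1 v ->
  norm1 (fun i => u i + v i) <= norm1 u + norm1 v.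
Proof.
move=> hu hv; rewrite /norm1 -lim_seriesD //.
apply: lim_series_le; [exact: in_l1D | exact: is_cvg_seriesD |].
by move=> i; apply: ler_normD.
Qed.

Lemma norm1Z s {v} : in_l1 v -> norm1 (fun i => s * v i) = `|s| * norm1 v.
Proof.
by move=> hv; rewrite /norm1; under eq_fun do rewrite normrM; exact: lim_seriesZ.
Qed.

Lemma norm1_ge0 {v} : in_l1 v -> 0 <= norm1 v.
Proof.
move=> hv; apply: limr_ge => //; near=> k; exact: sumr_ge0.
Unshelve. all: by end_near. Qed.

Lemma pairingD a u v : in_linf a -> in_l1 u -> in_l1 v ->
  pairing a (fun i => u i + v i) = pairing a u + pairing a v.
Proof.
move=> [M hM] hu hv; rewrite /pairing -lim_seriesD;
  try exact: is_cvg_series_bounded_mul hM.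
by congr (lim (series _ @ \oo)); apply/funext => i /=; rewrite mulrDr.
Qed.

Lemma pairingZ a s v : in_linf a -> in_l1 v ->
  pairing a (fun i => s * v i) = s * pairing a v.
Proof.
move=> [M hM] hv; rewrite /pairing -[RHS]/(s *: _) -lim_seriesZ;
  last exact: is_cvg_series_bounded_mul hM.
by congr (lim (series _ @ \oo)); apply/funext => i /=; rewrite mulrCA.
Qed.

Definition unitseq (j : nat) : R^nat := fun k => (k == j)%:R.

Lemma series_mul_unitseq a j :
  \forall m \near \oo, series (fun k => a k * unitseq j k) m = a j.
Proof.
near=> m; rewrite /series /= /unitseq.
have jm : (j < m)%N by near: m; exists j.+1.
rewrite (bigD1_seq j) ?mem_index_iota ?iota_uniq //= eqxx mulr1 big1 ?addr0 //.
by move=> k /negbTE ->; rewrite mulr0.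
Unshelve. all: by end_near. Qed.

Lemma pairing_unitseq a j : pairing a (unitseq j) = a j.
Proof. exact: lim_near_cst (series_mul_unitseq a j). Qed.

Lemma normr_unitseq j : (fun i => `|unitseq j i|) = (fun i => 1 * unitseq j i).
Proof. by apply/funext => i; rewrite mul1r ger0_norm. Qed.

Lemma in_l1_unitseq j : in_l1 (unitseq j).
Proof.
rewrite /in_l1 normr_unitseq; apply/cvg_ex; exists 1.
exact: cvg_near_cst (series_mul_unitseq _ j).
Qed.

Lemma norm1_unitseq j : norm1 (unitseq j) = 1.
Proof. rewrite /norm1 normr_unitseq; exact: lim_near_cst (series_mul_unitseq _ j). Qed.

Lemma linf_le1_of_pairing_le_norm1 a : in_linf a ->
  (forall v, in_l1 v -> pairing a v <= norm1 v) -> forall i, `|a i| <= 1.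
Proof.
move=> ha hle i; rewrite ler_norml; apply/andP; split.
- have := hle _ (in_l1Z (-1) (in_l1_unitseq i)).
  rewrite pairingZ ?norm1Z ?pairing_unitseq ?norm1_unitseq ?normrN1 //;
    try exact: in_l1_unitseq; lra.
- by have := hle _ (in_l1_unitseq i); rewrite pairing_unitseq norm1_unitseq.
Qed.

End SequenceSpaces.

Lemma interpolate_real {R : realType} (L U : set R) :
  (L !=set0 <-> U !=set0) -> (forall l u, L l -> U u -> l <= u) ->
  exists a, ubound L a /\ lbound U a.
Proof.
move=> LU hle; have [[u0 Uu0]|U0] := pselect (U !=set0); last first.
  exists 0; split=> [l Ll|u Uu]; case: U0; last by exists u.
  by apply: LU.1; exists l.
have [l0 Ll0] := LU.2 (ex_intro _ u0 Uu0).
exists (inf U); split=> [l Ll|].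
- by apply: lb_le_inf; [exists u0 | move=> u; exact: hle].
- by apply: ge_inf; exists l0 => u; exact: hle.
Qed.

Section ConeMinorant.
Context {R : realType} (n : nat) (K : ('I_n -> R) -> R -> Prop).
Hypothesis K_add : forall {y1 x1 y2 x2}, K y1 x1 -> K y2 x2 ->
  K (fun k => y1 k + y2 k) (x1 + x2).
Hypothesis K_scale : forall {t y x}, 0 < t -> K y x -> K (fun k => t * y k) (t * x).
Hypothesis K_opp : forall {y x}, K y x -> exists x', K (fun k => - y k) x'.
Hypothesis K_zero : forall {y x}, K y x -> (forall k, y k = 0) -> 0 <= x.

Definition vanish_from (j : nat) (y : 'I_n -> R) :=
  forall k : 'I_n, (j <= k)%N -> y k = 0.

Definition minorant_on (j : nat) (c : 'I_n -> R) :=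
  forall y x, K y x -> vanish_from j y -> \sum_(k < n) c k * y k <= x.

Lemma vanish_fromS j (jn : (j < n)%N) y :
  vanish_from j.+1 y -> y (Ordinal jn) = 0 -> vanish_from j y.
Proof.
move=> hy y0 k; rewrite leq_eqVlt => /orP[/eqP jk|]; last exact: hy.
by rewrite (_ : k = Ordinal jn) //; apply: val_inj; rewrite /= jk.
Qed.

Lemma minorant_onS j (jn : (j < n)%N) c :
  minorant_on j c -> exists c', minorant_on j.+1 c'.
Proof.
move=> hc; pose jo := Ordinal jn.
pose d y := \sum_(k < n) c k * y k - c jo * y jo.
pose side s z := exists y x,
  [/\ K y x, vanish_from j.+1 y, y jo = s & z = s * (x - d y)].
have sumD y1 y2 : \sum_(k < n) c k * (y1 k + y2 k) =
    \sum_(k < n) c k * y1 k + \sum_(k < n) c k * y2 k.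
  by rewrite -big_split; apply: eq_bigr => k _; rewrite mulrDr.
have [alpha [alpha_ub alpha_lb]] : exists alpha, ubound (side (-1)) alpha /\
    lbound (side 1) alpha.
  apply: interpolate_real => [|_ _ [y [x [Kyx hy y1 ->]]] [y' [x' [Ky'x' hy' y'1 ->]]]].
    have flip s : side s !=set0 -> side (- s) !=set0.
      move=> [_ [y [x [Kyx hy ys _]]]]; have [x' Kx'] := K_opp Kyx.
      exists (- s * (x' - d (fun k => - y k))), (fun k => - y k), x'.
      split=> //; last by rewrite ys.
      by move=> k jk; rewrite hy ?oppr0.
    by split=> /flip; rewrite ?opprK.
  have hyy' : vanish_from j (fun k => y k + y' k).
    apply: (@vanish_fromS _ jn); first by move=> k jk; rewrite hy ?hy' ?addr0.
    by rewrite -/jo y1 y'1 addNr.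
  have := hc _ _ (K_add Kyx Ky'x') hyy'; rewrite sumD /d y1 y'1; lra.
pose c' k := if k == jo then alpha else c k.
have c'E y : \sum_(k < n) c' k * y k = d y + alpha * y jo.
  rewrite /d (bigD1 jo) //= [in RHS](bigD1 jo) //= /c' eqxx.
  rewrite (eq_bigr (fun k => c k * y k)); last by move=> k /negbTE ->.
  ring.
have c'Z t y : \sum_(k < n) c' k * (t * y k) = t * \sum_(k < n) c' k * y k.
  by rewrite mulr_sumr; apply: eq_bigr => k _; rewrite mulrCA.
have unit_case y x : K y x -> vanish_from j.+1 y -> `|y jo| = 1 ->
    \sum_(k < n) c' k * y k <= x.
  move=> Kyx hy; rewrite c'E; have [yp|yn] := ger0P (y jo) => y1.
  - have : alpha <= 1 * (x - d y) by apply: alpha_lb; exists y, x.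
    rewrite y1; lra.
  - have y1' : y jo = -1 by rewrite -[y jo]opprK y1.
    have : -1 * (x - d y) <= alpha by apply: alpha_ub; exists y, x.
    rewrite y1'; lra.
exists c' => y x Kyx hy; have [y0|y0] := eqVneq (y jo) 0.
  rewrite c'E y0 mulr0 addr0 /d y0 mulr0 subr0.
  by apply: hc; last exact: (@vanish_fromS _ jn).
have t0 : 0 < `|y jo|^-1 by rewrite invr_gt0 normr_gt0.
have := unit_case _ _ (K_scale t0 Kyx); rewrite c'Z ler_pM2l //; apply.
  by move=> k jk /=; rewrite (hy k) ?mulr0.
by rewrite (@normrM R) gtr0_norm // mulVf // normr_eq0.
Qed.

Lemma cone_linear_minorant :
  exists c : 'I_n -> R, forall y x, K y x -> \sum_(k < n) c k * y k <= x.
Proof.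
suff minorant_upto j : (j <= n)%N -> exists c, minorant_on j c.
  have [c hc] := minorant_upto n (leqnn n).
  by exists c => y x Kyx; apply: hc Kyx _ => k; rewrite leqNgt ltn_ord.
elim: j => [_|j IH jn].
  exists (fun=> 0) => y x Kyx y0; rewrite big1 => [|k _]; last by rewrite mul0r.
  by apply: K_zero Kyx _ => k; apply: y0.
by have [c hc] := IH (ltnW jn); exact: minorant_onS hc.
Qed.

End ConeMinorant.

Section MinimumNormSolution.
Context {R : realType} {H : normedModType R} {ip : H -> H -> R}
  {A : H -> R^nat} {Astar : R^nat -> H} {n : nat} {e : 'I_n -> H} {f : H}.
Hypothesis ipDl : forall (a : R) (x y z : H), ip (a *: x + y) z = a * ip x z + ip y z.
Hypothesis ipC : forall x y : H, ip x y = ip y x.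
Hypothesis A_linf : forall z, in_linf (A z).
Hypothesis Astar_adjoint : is_adjoint ip A Astar.

Local Notation feasible := (constraint ip Astar (span_of e) f).
Local Notation min_solution := (is_min_solution ip Astar (span_of e) f).
Local Notation moment v k := (pairing (A (e k)) v).

Lemma ip_suml (c : 'I_n -> R) w :
  ip (\sum_(k < n) c k *: e k) w = \sum_(k < n) c k * ip (e k) w.
Proof.
have ip0 : ip 0 w = 0 by have := ipDl 1 0 0 w; rewrite scaler0 addr0 mul1r; lra.
by apply: (big_rec2 (fun z r => ip z w = r)) => // k z r _ <-; exact: ipDl.
Qed.

Lemma pairing_A_span (c : 'I_n -> R) v : in_l1 v ->
  pairing (A (\sum_(k < n) c k *: e k)) v = \sum_(k < n) c k * moment v k.
Proof.
move=> hv; rewrite -Astar_adjoint // ipC ip_suml.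
by apply: eq_bigr => k _; rewrite ipC Astar_adjoint.
Qed.

Lemma feasible_moments u v : in_l1 u -> in_l1 v -> feasible u ->
  (forall k, moment v k = moment u k) -> feasible v.
Proof.
move=> hu hv hcu hvu _ [c ->]; rewrite -hcu; last by exists c.
rewrite ipC Astar_adjoint // [RHS]ipC Astar_adjoint // !pairing_A_span //.
by apply: eq_bigr => k _; rewrite hvu.
Qed.

Lemma En_min_solution u : En A (span_of e) u -> feasible u -> min_solution u.
Proof.
move=> [hu [xi [[_ [xi_le1 xi_u]] [z hz Az]]]] hcu; split=> //; split=> // v hv hcv.
rewrite -xi_u -Az -Astar_adjoint // -ipC hcu // -(hcv _ hz) ipC Astar_adjoint //.
by rewrite Az; exact: pairing_le_norm1.
Qed.

Lemma min_solution_scaled u v t : min_solution u -> in_l1 v ->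
  (forall k, moment v k = t * moment u k) -> t * norm1 u <= norm1 v.
Proof.
move=> [hu [hcu umin]] hv hvu; have [t_gt0|t_le0] := ltrP 0 t; last first.
  by apply: (le_trans _ (norm1_ge0 hv)); rewrite mulr_le0_ge0 // norm1_ge0.
have hv' := in_l1Z t^-1 hv.
have feas : feasible (fun i => t^-1 * v i).
  apply: feasible_moments hu hv' hcu _ => k.
  by rewrite pairingZ // hvu mulrA mulVf ?gt_eqF // mul1r.
have := umin _ hv' feas; rewrite norm1Z // gtr0_norm ?invr_gt0 // => u_le.
have : t * norm1 u <= t * (t^-1 * norm1 v) by rewrite ler_pM2l.
by rewrite mulrA mulfV ?gt_eqF // mul1r.
Qed.

Lemma min_solution_multiplier u : min_solution u ->
  exists2 z, span_of e z &
    (forall v, in_l1 v -> pairing (A z) v <= norm1 v) /\ pairing (A z) u = norm1 u.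
Proof.
move=> umin; have hu := umin.1.
pose K y x := exists v t, [/\ in_l1 v, y = (fun k => moment v k - t * moment u k)
  & norm1 v - t * norm1 u <= x].
have [c hc] : exists c : 'I_n -> R, forall y x, K y x -> \sum_(k < n) c k * y k <= x.
  apply: cone_linear_minorant.
  - move=> _ x1 _ x2 [v1 [t1 [h1 -> hx1]]] [v2 [t2 [h2 -> hx2]]].
    exists (fun i => v1 i + v2 i), (t1 + t2); split; first exact: in_l1D.
      by apply/funext => k; rewrite pairingD //; ring.
    by have := norm1D h1 h2; lra.
  - move=> s _ x s_gt0 [v [t [hv -> hx]]].
    exists (fun i => s * v i), (s * t); split; first exact: in_l1Z.
      by apply/funext => k; rewrite pairingZ //; ring.
    by rewrite norm1Z // gtr0_norm // -mulrA -mulrBr ler_pM2l.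
  - move=> _ _ [v [t [hv -> _]]]; exists (norm1 v + t * norm1 u).
    exists (fun i => -1 * v i), (- t); split; first exact: in_l1Z.
      by apply/funext => k; rewrite pairingZ //; ring.
    by rewrite norm1Z // normrN1 mul1r; lra.
  - move=> _ x [v [t [hv -> hx]]] y0.
    have vu k : moment v k = t * moment u k by apply/eqP; rewrite -subr_eq0 y0.
    by have := min_solution_scaled u v t umin hv vu; lra.
have cert v t : in_l1 v -> \sum_(k < n) c k * moment v k
    - t * \sum_(k < n) c k * moment u k <= norm1 v - t * norm1 u.
  move=> hv; rewrite mulr_sumr -sumrB.
  under eq_bigr do rewrite mulrCA -mulrBr.
  by apply: hc; exists v, t.
exists (\sum_(k < n) c k *: e k); first by exists c.
split=> [v hv|]; rewrite pairing_A_span //.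
  by have := cert v 0 hv; rewrite !mul0r !subr0.
have cert_u s : (s - 1) * \sum_(k < n) c k * moment u k <= (`|s| - 1) * norm1 u.
  have := cert _ 1 (in_l1Z s hu); rewrite norm1Z //.
  under eq_bigr do rewrite pairingZ // mulrCA.
  by rewrite -mulr_sumr; lra.
by have := cert_u 0; have := cert_u 2; rewrite normr0 ger0_norm //; lra.
Qed.

Lemma min_solution_En u : min_solution u -> En A (span_of e) u.
Proof.
move=> umin; have [z hz [Az_le Az_u]] := min_solution_multiplier u umin.
split; first exact: umin.1.
exists (A z); split; last by exists z.
by split; [exact: A_linf | split=> //; exact: linf_le1_of_pairing_le_norm1].
Qed.

End MinimumNormSolution.

Theorem proposition2 (R : realType) (H : completeNormedModType R)
  (ip : H -> H -> R) (A : H -> R^nat) (Astar : R^nat -> H)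
  (n : nat) (e : 'I_n -> H) (f : H) (un : R^nat) :
  is_inner_product ip ->
  bounded_linear_c0 A ->
  is_adjoint ip A Astar ->
  lin_indep e ->
  (forall z, span_of e z -> A z = 0 -> z = 0) ->
  (is_min_solution ip Astar (span_of e) f un <->
   (En A (span_of e) un /\ constraint ip Astar (span_of e) f un)).
Proof.
move=> [ipDl [ipC _]] [_ [_ [C A_bound]]] adj _ _.
have A_linf z : in_linf (A z) by exists (C * `|z|).
split=> [umin | [uEn ufeas]].
- by split; [exact: (min_solution_En ipDl ipC A_linf adj _ umin) | case: umin => _ []].
- exact: (En_min_solution ipC adj _ uEn ufeas).
Qed.
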